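(* Let $n\ge1$ and let $\mathbf 1=(1,1,\dots,1)$ ($n$ entries). Then (i) the map $w\mapsto\varphi_r((w,\mathbf 1))$ is a bijection from $M_{rb}(n)$ onto the set $NC_n$ of noncrossing partitions of $[n]$; (ii) the map $w\mapsto\varphi_l((w,\mathbf 1))$ is a bijection from $M_{rb}(n)$ onto the set $NN_n$ of nonnesting partitions of $[n]$.
   Context: A Motzkin path of length $n$ is a sequence of points $s_0=(0,0),s_1,\dots,s_n=(n,0)$, $s_i=(i,y_i)$, $y_i\ge0$, each step $(s_{i-1},s_i)$ East, North-East or South-East ($y_i-y_{i-1}=0,1,-1$); step $(s_{i-1},s_i)$ has index $i$ and height $y_{i-1}$. A restricted bicolored Motzkin path is a Motzkin path whose East steps are colored red or blue, every blue East step having height $>0$; $M_{rb}(n)$ is the set of these of length $n$. A Charlier diagram of length $n$ is a pair $(w,\xi)$, $w\in M_{rb}(n)$, $\xi=(\xi_1,\dots,\xi_n)$ integers with $\xi_i=1$ if step $i$ is North-East or red East, and $1\le\xi_i\le k$ if step $i$ is South-East or blue East of height $k$. $\varphi_l(w,\xi)$ is the partition of $[n]$ obtained thus: maintain a set $V$ (initially empty) and edge set $E$; for $i=1,\dots,n$: if step $i$ is North-East add $i$ to $V$; if red East do nothing; if South-East or blue East, let $x$ be the $\xi_i$-th smallest element of $V$, add edge $(x,i)$, remove $x$ from $V$, and if blue East add $i$ to $V$; the blocks are the connected components of $([n],E)$. $\varphi_r$ is the same with ''$\xi_i$-th largest''. For a partition of $[n]$ (set of disjoint nonempty blocks covering $[n]$),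 edges are pairs $(i,j)$, $i<j$, of consecutive elements of a block; two edges $(i_1,j_1),(i_2,j_2)$ cross if $i_1<i_2<j_1<j_2$ and nest if $i_1<i_2<j_2<j_1$. A partition is noncrossing (resp. nonnesting) if no two of its edges cross (resp. nest). *)

From HB Require Import structures.
From mathcomp Require Import all_boot.
Set Implicit Arguments. Unset Strict Implicit. Unset Printing Implicit Defensive.

Inductive step := NE | SE | RedE | BlueE.

Definition step_code (s : step) : nat :=
  match s with NE => 0 | SE => 1 | RedE => 2 | BlueE => 3 end.
Definition code_step (n : nat) : step :=
  match n with 0 => NE | 1 => SE | 2 => RedE | _ => BlueE end.
Lemma step_codeK : cancel step_code code_step. Proof. by case. Qed.
HB.instance Definition _ := Equality.copy step (can_type step_codeK).

Fixpoint rb_from (h : nat) (s : seq step) : bool :=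
  match s with
  | [::] => h == 0
  | NE :: s' => rb_from h.+1 s'
  | SE :: s' => (0 < h) && rb_from h.-1 s'
  | RedE :: s' => rb_from h s'
  | BlueE :: s' => (0 < h) && rb_from h s'
  end.

Definition Mrb (n : nat) (w : seq step) : bool := (size w == n) && rb_from 0 w.

(* Selection of the xi-th smallest (left = true) or xi-th largest
   (left = false) element of V; V is kept as an increasing list. *)
Definition pickV (left : bool) (V : seq nat) (k : nat) : nat :=
  if left then nth 0 V k.-1 else nth 0 (rev V) k.-1.

(* The edge-building process of phi_l / phi_r.  i is the (1-based) index
   of the current step; xi is the remaining sequence (xi_i, xi_{i+1}, ...).
   Returns the edge set E as a list of pairs (x, i). *)
Fixpoint phi_edges (left : bool) (i : nat) (s : seq step) (xi : seq nat)
    (V : seq nat) (E : seq (nat * nat)) : seq (nat * nat) :=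
  match s with
  | [::] => E
  | st :: s' =>
    let k := head 0 xi in
    let xi' := behead xi in
    match st with
    | NE => phi_edges left i.+1 s' xi' (rcons V i) E
    | RedE => phi_edges left i.+1 s' xi' V E
    | SE => let x := pickV left V k in
            phi_edges left i.+1 s' xi' (rem x V) ((x, i) :: E)
    | BlueE => let x := pickV left V k in
            phi_edges left i.+1 s' xi' (rcons (rem x V) i) ((x, i) :: E)
    end
  end.

(* [n] = {1,...,n} is represented by 'I_n, element j : 'I_n standing for j+1. *)
Definition edge_adj (n : nat) (E : seq (nat * nat)) : rel 'I_n :=
  fun a b => ((a.+1, b.+1) \in E) || ((b.+1, a.+1) \in E).

Definition components (n : nat) (E : seq (nat * nat)) : {set {set 'I_n}} :=
  [set [set y | connect (edge_adj E) x y] | x : 'I_n].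

Definition phi_gen (left : bool) (n : nat) (w : seq step) (xi : seq nat)
  : {set {set 'I_n}} := components n (phi_edges left 1 w xi [::] [::]).

Definition phi_l (n : nat) (w : seq step) (xi : seq nat) := phi_gen true n w xi.
Definition phi_r (n : nat) (w : seq step) (xi : seq nat) := phi_gen false n w xi.

Definition is_edge (n : nat) (P : {set {set 'I_n}}) (i j : 'I_n) : bool :=
  [exists B in P, [&& i \in B, j \in B, i < j &
                      [forall k in B, ~~ ((i < k) && (k < j))]]].

Definition noncrossing (n : nat) (P : {set {set 'I_n}}) : bool :=
  [forall i1, forall j1, forall i2, forall j2,
     (is_edge P i1 j1 && is_edge P i2 j2) ==>
     ~~ [&& i1 < i2, i2 < j1 & j1 < j2]].

Definition nonnesting (n : nat) (P : {set {set 'I_n}}) : bool :=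
  [forall i1, forall j1, forall i2, forall j2,
     (is_edge P i1 j1 && is_edge P i2 j2) ==>
     ~~ [&& i1 < i2, i2 < j2 & j2 < j1]].

Definition NC (n : nat) : {set {set {set 'I_n}}} :=
  [set P | partition P [set: 'I_n] & noncrossing P].
Definition NN (n : nat) : {set {set {set 'I_n}}} :=
  [set P | partition P [set: 'I_n] & nonnesting P].

Definition bij_onto (n : nat) (A : pred (seq step))
    (f : seq step -> {set {set 'I_n}}) (S : {set {set {set 'I_n}}}) : Prop :=
  [/\ (forall w, A w -> f w \in S),
      (forall w1 w2, A w1 -> A w2 -> f w1 = f w2 -> w1 = w2) &
      (forall P, P \in S -> exists2 w, A w & f w = P)].

From mathcomp Require Import all_boot.
From mathcomp Require Import zify.
Set Implicit Arguments. Unset Strict Implicit. Unset Printing Implicit Defensive.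

(* With xi = (1, ..., 1), phi_r always closes the most recently opened point (a
   stack) and phi_l the oldest one (a queue).  Hence the edges built from a path
   form an arc system -- every point has at most one outgoing and one incoming
   arc -- with no two arcs crossing (resp. nesting); the blocks of the partition
   are the chains of arcs, so the edges of the partition are exactly these arcs.
   A step is North-East, South-East or blue East according as its index has an
   outgoing arc, an incoming arc or both, so the path is read off the partition.
   Conversely, the edges of a noncrossing (resp. nonnesting) partition prescribe
   such step types; the resulting path has height, after t steps, the number of
   arcs passing over t, and since an arc system without crossings (resp.
   nestings) is determined by its sets of sources and targets, running the
   process on that path gives back the partition. *)

(** * Partitions as chains of edges *)

Lemma is_edgeE n (P : {set {set 'I_n}}) : partition P [set: 'I_n] -> forall i j : 'I_n,
  is_edge P i j =
  [&& j \in pblock P i, i < j & [forall k in pblock P i, ~~ ((i < k) && (k < j))]].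
Proof.
case/and3P=> /eqP covP trP _ i j; have iP : i \in cover P by rewrite covP inE.
apply/existsP/and3P => [[B /andP [BP /and4P [iB jB ij between]]]|[jB ij between]].
  by rewrite (def_pblock trP BP iB).
by exists (pblock P i); rewrite pblock_mem //= mem_pblock iP jB ij.
Qed.

Lemma connect_first (T : finType) (e : rel T) x y :
  connect e x y -> x = y \/ exists2 z, e x z & connect e z y.
Proof.
case/connectP=> -[|z p] /=; first by move=> _ ->; left.
by case/andP=> exz pz ->; right; exists z => //; apply/connectP; exists p.
Qed.

Lemma connect_functional (T : finType) (e : rel T) :
  (forall x y y', e x y -> e x y' -> y = y') ->
  forall x y z, connect e x y -> connect e x z -> connect e y z || connect e z y.
Proof.
move=> efun x y z /connectP [p]; elim: p x => [|u p IH] x /=; first by move=> _ -> ->.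
case/andP=> exu pu yl cxz; case: (connect_first cxz) => [<-|[v exv cvz]].
  by apply/orP; right; apply/connectP; exists (u :: p); rewrite /= ?exu.
by rewrite (efun _ _ _ exv exu) in cvz; exact: IH pu yl cvz.
Qed.

Record chain_rel n (e : rel 'I_n) : Prop := ChainRel {
  chain_lt : forall i j, e i j -> i < j;
  chain_func : forall i j j', e i j -> e i j' -> j = j';
  chain_inj : forall i i' j, e i j -> e i' j -> i = i' }.

Section Chain.
Variables (n : nat) (e : rel 'I_n).
Hypothesis he : chain_rel e.

Definition linked (x y : 'I_n) := connect e x y || connect e y x.

Lemma connect_chain_le x y : connect e x y -> x <= y.
Proof.
case/connectP=> p; elim: p x => [|z p IH] x /=; first by move=> _ ->.
by case/andP=> /(chain_lt he) xz /IH yl /yl; apply: leq_trans (ltnW xz).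
Qed.

Lemma linked_trans x y z : linked x y -> linked y z -> linked x z.
Proof.
have erev_fun a b b' : [rel u v | e v u] a b -> [rel u v | e v u] a b' -> b = b'.
  exact: chain_inj.
move=> /orP [xy|yx] /orP [yz|zy].
- by rewrite /linked (connect_trans xy yz).
- have := connect_functional erev_fun (x := y) (y := x) (z := z).
  by rewrite !connect_rev /= /linked orbC; apply.
- exact: connect_functional (chain_func he) _ _ _ yx yz.
- by rewrite /linked (connect_trans zy yx) orbT.
Qed.

Lemma linked_is_edge (P : {set {set 'I_n}}) : partition P [set: 'I_n] ->
  (forall x y, (y \in pblock P x) = linked x y) -> is_edge P =2 e.
Proof.
move=> hP hlink i j; rewrite is_edgeE // hlink.
apply/and3P/idP => [[lij ij /forall_inP between]|eij].
  have cij : connect e i j.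
    by case/orP: lij => // /connect_chain_le; rewrite leqNgt ij.
  case: (connect_first cij) => [ji|[k eik ckj]]; first by rewrite ji ltnn in ij.
  case: (ltngtP k j) => [kj|jk|/val_inj <- //].
    have := between k; rewrite hlink /linked connect1 // (chain_lt he eik) kj.
    by move=> /(_ isT).
  by have := connect_chain_le ckj; rewrite leqNgt jk.
have ij := chain_lt he eij.
split=> //; first by rewrite /linked connect1.
apply/forall_inP => k; rewrite hlink; case/orP=> [cik|cki]; apply/negP => /andP [ik kj].
  case: (connect_first cik) => [ki|[l eil clk]]; first by rewrite ki ltnn in ik.
  rewrite (chain_func he eil eij) in clk.
  by have := connect_chain_le clk; rewrite leqNgt kj.
by have := connect_chain_le cki; rewrite leqNgt ik.
Qed.
End Chain.

Definition ord_rel n (G : rel nat) : rel 'I_n := fun i j => G i.+1 j.+1.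
Arguments ord_rel : clear implicits.
Definition arcs (E : seq (nat * nat)) : rel nat := fun a b => (a, b) \in E.

Section Components.
Variables (n : nat) (E : seq (nat * nat)).

Lemma edge_adj_sym : symmetric (@edge_adj n E).
Proof. by move=> x y; rewrite /edge_adj orbC. Qed.

Lemma components_equivalence :
  components n E = equivalence_partition (connect (@edge_adj n E)) [set: 'I_n].
Proof.
by apply/setP => B; apply/imsetP/imsetP => -[x _ ->]; exists x => //; apply/setP => y;
  rewrite !inE.
Qed.

Lemma components_partition : partition (components n E) [set: 'I_n].
Proof.
rewrite components_equivalence; apply: equivalence_partitionP => x y z _ _ _.
by split=> [|/(same_connect (sym_connect_sym edge_adj_sym))]; rewrite ?connect0.
Qed.

Lemma pblock_components x y :
  (y \in pblock (components n E) x) = connect (@edge_adj n E) x y.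
Proof.
rewrite components_equivalence pblock_equivalence_partition ?inE // => {}x {}y {}z _ _ _.
by split=> [|/(same_connect (sym_connect_sym edge_adj_sym))]; rewrite ?connect0.
Qed.

Hypothesis hE : chain_rel (ord_rel n (arcs E)).

Lemma connect_edge_adj : connect (@edge_adj n E) =2 linked (ord_rel n (arcs E)).
Proof.
move=> x y; apply/idP/idP.
  case/connectP=> p; elim: p x => [|z p IH] x /=.
    by move=> _ ->; rewrite /linked connect0.
  case/andP=> exz /IH pz /pz zy; apply: (linked_trans hE _ zy).
  by case/orP: exz => exz; apply/orP; [left|right]; apply: connect1.
have sub : subrel (ord_rel n (arcs E)) (connect (@edge_adj n E)).
  by move=> a b eab; apply: connect1; apply/orP; left.
case/orP=> [|c]; first exact: connect_sub.
by rewrite (sym_connect_sym edge_adj_sym); apply: connect_sub c.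
Qed.

Lemma is_edge_components : is_edge (components n E) =2 ord_rel n (arcs E).
Proof.
apply: (linked_is_edge hE components_partition) => x y.
by rewrite pblock_components connect_edge_adj.
Qed.
End Components.

Section PartitionEdges.
Variables (n : nat) (P : {set {set 'I_n}}).
Hypothesis hP : partition P [set: 'I_n].

Let trP : trivIset P. Proof. by case/and3P: hP. Qed.
Let covP x : x \in cover P. Proof. by rewrite (cover_partition hP) inE. Qed.

Lemma is_edge_chain : chain_rel (is_edge P).
Proof.
split=> [i j|i j j'|i i' j]; rewrite ?is_edgeE //; first by case/and3P.
  case/and3P=> jB ij /forall_inP Bj /and3P [j'B ij' /forall_inP Bj'].
  apply: val_inj; case: (ltngtP j j') => // [jj'|j'j].
    by have := Bj' j jB; rewrite ij jj'.
  by have := Bj j' j'B; rewrite ij' j'j.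
case/and3P=> jB ij /forall_inP Bi /and3P [jB' i'j /forall_inP Bi'].
have same : pblock P i = pblock P i'.
  by rewrite -(same_pblock trP jB) (same_pblock trP jB').
apply: val_inj; case: (ltngtP i i') => // [ii'|i'i].
  by have := Bi i'; rewrite same mem_pblock covP ii' i'j => /(_ isT).
by have := Bi' i; rewrite -same mem_pblock covP i'i ij => /(_ isT).
Qed.

Lemma connect_is_edge_pblock x y : connect (is_edge P) x y -> y \in pblock P x.
Proof.
case/connectP=> p; elim: p x => [|z p IH] x /=; first by move=> _ ->; rewrite mem_pblock.
case/andP; rewrite is_edgeE // => /and3P [zB _ _] /IH pz /pz.
by rewrite (same_pblock trP zB).
Qed.

Lemma pblock_connect x y : y \in pblock P x -> x < y -> connect (is_edge P) x y.
Proof.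
move: {2}(y - x) (leqnn (y - x)) => d; elim: d x => [|d IH] x hd yB xy.
  by move: hd; rewrite leqn0 subn_eq0 leqNgt xy.
pose S := [pred k : 'I_n | (k \in pblock P x) && (x < k)].
have Sy : S y by rewrite /= yB xy.
case: (arg_minnP (fun k : 'I_n => val k) Sy) => m /andP [mB xm] m_min.
have exm : is_edge P x m.
  rewrite is_edgeE // mB xm; apply/forall_inP => k kB; apply/negP => /andP [xk km].
  by have := m_min k; rewrite /= kB xk leqNgt km => /(_ isT).
case: (ltngtP m y) => [my|ym|/val_inj <-]; last exact: connect1.
  apply: connect_trans (connect1 exm) (IH _ _ _ my); last by rewrite (same_pblock trP mB).
  by rewrite -ltnS (leq_trans _ hd) // ltn_sub2l // (ltn_trans xm my).
by have := m_min y Sy; rewrite leqNgt ym.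
Qed.

Lemma pblock_linked x y : (y \in pblock P x) = linked (is_edge P) x y.
Proof.
apply/idP/orP => [yB|[|/connect_is_edge_pblock xB]]; last first.
- by rewrite (same_pblock trP xB) mem_pblock.
- exact: connect_is_edge_pblock.
case: (ltngtP x y) => [xy|yx|/val_inj ->]; last by left; apply: connect0.
  by left; apply: pblock_connect.
by right; apply: pblock_connect; rewrite // (same_pblock trP yB) mem_pblock.
Qed.
End PartitionEdges.

Lemma partition_eq_edges n (P Q : {set {set 'I_n}}) :
  partition P [set: 'I_n] -> partition Q [set: 'I_n] -> is_edge P =2 is_edge Q -> P = Q.
Proof.
move=> hP hQ PQ.
rewrite -(equivalence_partition_pblock hP) -(equivalence_partition_pblock hQ).
apply: eq_imset => x; apply/setP => y.
by rewrite !inE (pblock_linked hP) (pblock_linked hQ) /linked !(eq_connect PQ).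
Qed.

(** * Arc systems *)

Record arc_system n (G : rel nat) : Prop := ArcSystem {
  arc_bound : forall a b, G a b -> [&& 0 < a, a < b & b <= n];
  arc_func : forall a b b', G a b -> G a b' -> b = b';
  arc_inj : forall a a' b, G a b -> G a' b -> a = a' }.

Section ArcSystem.
Variables (n : nat) (G : rel nat).
Hypothesis hG : arc_system n G.

Lemma arc_system_chain : chain_rel (ord_rel n G).
Proof.
split=> [i j /(arc_bound hG) /and3P [] //|i j j' gij gij'|i i' j gij gi'j].
  by apply: val_inj; case: (arc_func hG gij gij').
by apply: val_inj; case: (arc_inj hG gij gi'j).
Qed.

Lemma arc_ord a b : G a b -> exists i j : 'I_n, [/\ a = i.+1, b = j.+1 & ord_rel n G i j].
Proof.
move=> gab; have /and3P [a0 ab bn] := arc_bound hG gab.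
have ai : a.-1 < n by lia.
have bj : b.-1 < n by lia.
by exists (Ordinal ai), (Ordinal bj); rewrite /ord_rel /= !prednK //; lia.
Qed.
End ArcSystem.

Lemma arc_system_eq n G H : arc_system n G -> arc_system n H ->
  ord_rel n G =2 ord_rel n H -> G =2 H.
Proof.
have sub G' H' : arc_system n G' -> ord_rel n G' =2 ord_rel n H' ->
    forall a b, G' a b -> H' a b.
  move=> hG' GH a b /(arc_ord hG') [i [j [-> -> gij]]].
  by rewrite -[H' _ _]/(ord_rel n H' i j) -GH.
move=> hG hH GH a b; apply/idP/idP; first exact: sub.
by apply: sub => // i j; rewrite GH.
Qed.

Definition edge_arcs n (P : {set {set 'I_n}}) : rel nat :=
  fun a b => [exists i : 'I_n, exists j : 'I_n, [&& a == i.+1, b == j.+1 & is_edge P i j]].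

Lemma ord_rel_edge_arcs n (P : {set {set 'I_n}}) : ord_rel n (edge_arcs P) =2 is_edge P.
Proof.
move=> i j; apply/existsP/idP => [[i' /existsP [j' /and3P [/eqP [ii'] /eqP [jj'] e]]]|e].
  by rewrite (val_inj ii') (val_inj jj').
by exists i; apply/existsP; exists j; rewrite !eqxx.
Qed.

Lemma edge_arcs_system n (P : {set {set 'I_n}}) :
  partition P [set: 'I_n] -> arc_system n (edge_arcs P).
Proof.
move=> hP; have [e_lt e_func e_inj] := is_edge_chain hP.
have edge_arcsP a b :
    edge_arcs P a b -> exists i j : 'I_n, [/\ a = i.+1, b = j.+1 & is_edge P i j].
  by case/existsP=> i /existsP [j /and3P [/eqP -> /eqP -> e]]; exists i, j.
split.
- by move=> a b /edge_arcsP [i [j [-> -> /e_lt ij]]]; rewrite /= ltnS ij ltn_ord.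
- move=> a b b' /edge_arcsP [i [j [-> -> eij]]].
  move=> /edge_arcsP [i' [j' [[/val_inj ii'] -> eij']]].
  by rewrite -ii' in eij'; rewrite (e_func _ _ _ eij eij').
- move=> a a' b /edge_arcsP [i [j [-> -> eij]]].
  move=> /edge_arcsP [i' [j' [-> [/val_inj jj'] eij']]].
  by rewrite -jj' in eij'; rewrite (e_inj _ _ _ eij eij').
Qed.

Definition first_before (left : bool) (x y : nat) : bool := if left then x < y else y < x.

(* Every arc (a, b) starts at the first point, in the order [first_before left],
   among those still open at time b.  For [left] this forbids nestings, otherwise
   crossings. *)
Definition extreme_arcs (left : bool) (G : rel nat) : Prop :=
  forall a b a' b', G a b -> G a' b' -> a' != a -> a' < b -> b < b' ->
  first_before left a a'.

Definition good_partitions left n := if left then NN n else NC n.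

Lemma good_partitionsP left n (P : {set {set 'I_n}}) G :
  partition P [set: 'I_n] -> arc_system n G -> is_edge P =2 ord_rel n G ->
  P \in good_partitions left n <-> extreme_arcs left G.
Proof.
move=> hP hG PG; rewrite /good_partitions.
case: left; rewrite inE hP /=; split.
- move=> /forallP nn a b a' b' /(arc_ord hG) [i [j [-> -> eij]]].
  move=> /(arc_ord hG) [i' [j' [-> -> ei'j']]].
  have := nn i' => /forallP /(_ j') /forallP /(_ i) /forallP /(_ j).
  have ij := chain_lt (arc_system_chain hG) eij.
  rewrite !PG eij ei'j' /=; lia.
- move=> ext; apply/forallP => i1; apply/forallP => j1; apply/forallP => i2.
  apply/forallP => j2; rewrite !PG; apply/implyP => /andP [e1 e2].
  have := ext _ _ _ _ e2 e1; rewrite /first_before; lia.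
- move=> /forallP nc a b a' b' /(arc_ord hG) [i [j [-> -> eij]]].
  move=> /(arc_ord hG) [i' [j' [-> -> ei'j']]].
  have := nc i => /forallP /(_ j) /forallP /(_ i') /forallP /(_ j').
  rewrite !PG eij ei'j' /=; lia.
- move=> ext; apply/forallP => i1; apply/forallP => j1; apply/forallP => i2.
  apply/forallP => j2; rewrite !PG; apply/implyP => /andP [e1 e2].
  have := ext _ _ _ _ e1 e2; rewrite /first_before; lia.
Qed.

Definition has_out n (G : rel nat) (a : nat) : bool := has (G a) (iota 1 n).
Definition has_in n (G : rel nat) (b : nat) : bool := has (G^~ b) (iota 1 n).

Section Uniqueness.
Variables (left : bool) (n : nat).

(* If two extreme arc systems agree on the arcs closing before b, an arc of one
   closing at b is an arc of the other: otherwise the two sources would each have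
   to come first before the other. *)
Lemma extreme_arcs_transfer G H b a :
  arc_system n G -> arc_system n H -> extreme_arcs left G -> extreme_arcs left H ->
  (forall a, 0 < a <= n -> has_out n G a = has_out n H a) ->
  (forall b, 0 < b <= n -> has_in n G b = has_in n H b) ->
  (forall a' c, c < b -> G a' c = H a' c) -> G a b -> H a b.
Proof.
move=> hG hH xG xH outGH inGH before gab.
have /and3P [a0 ab bn] := arc_bound hG gab.
have : has_in n H b.
  by rewrite -inGH; [apply/hasP; exists a; rewrite ?mem_iota //; lia | lia].
case/hasP=> a' _ ha'b; case: (eqVneq a' a) => [<- //|a'a].
have /and3P [a'0 a'b _] := arc_bound hH ha'b.
have : has_out n G a'.
  by rewrite outGH; [apply/hasP; exists b; rewrite ?mem_iota //; lia | lia].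
case/hasP=> c _ ga'c.
have bc : b < c.
  case: (ltngtP b c) => // [cb|cb].
    by rewrite (before _ _ cb) in ga'c; rewrite (arc_func hH ha'b ga'c) ltnn in cb.
  by rewrite -cb in ga'c; rewrite (arc_inj hG gab ga'c) eqxx in a'a.
have : has_out n H a.
  by rewrite -outGH; [apply/hasP; exists b; rewrite ?mem_iota //; lia | lia].
case/hasP=> d _ had; case: (ltngtP b d) => [bd|db|-> //].
  have := xG _ _ _ _ gab ga'c a'a a'b bc; have := xH _ _ _ _ ha'b had; rewrite eq_sym a'a.
  by rewrite /first_before => /(_ isT ab bd); case: left; lia.
by rewrite -(before _ _ db) in had; rewrite (arc_func hG gab had) ltnn in db.
Qed.

Lemma extreme_arcs_unique G H :
  arc_system n G -> arc_system n H -> extreme_arcs left G -> extreme_arcs left H ->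
  (forall a, 0 < a <= n -> has_out n G a = has_out n H a) ->
  (forall b, 0 < b <= n -> has_in n G b = has_in n H b) -> G =2 H.
Proof.
move=> hG hH xG xH outGH inGH a b; elim/ltn_ind: b a => b IH a.
apply/idP/idP => gab.
  by apply: (extreme_arcs_transfer hG hH xG xH outGH inGH _ gab) => a' c cb; rewrite IH.
by apply: (extreme_arcs_transfer hH hG xH xG _ _ _ gab) => [a' ha'|b' hb'|a' c cb];
  rewrite ?outGH ?inGH ?IH.
Qed.
End Uniqueness.

(** * The edge-building process *)

Definition opens (s : step) : bool := (s == NE) || (s == BlueE).
Definition closes (s : step) : bool := (s == SE) || (s == BlueE).
Definition step_of (o c : bool) : step :=
  if o then (if c then BlueE else NE) else (if c then SE else RedE).

Lemma step_ofK s : step_of (opens s) (closes s) = s.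
Proof. by case: s. Qed.

Lemma opens_step_of o c : opens (step_of o c) = o.
Proof. by case: o; case: c. Qed.

Lemma closes_step_of o c : closes (step_of o c) = c.
Proof. by case: o; case: c. Qed.

Lemma rb_from_cons h s w :
  rb_from h (s :: w) = (closes s ==> (0 < h)) && rb_from (h - closes s + opens s) w.
Proof. by case: s => /=; rewrite ?subn0 ?addn0 ?addn1 ?subn1 //; case: h. Qed.

Definition step_at (w : seq step) (a : nat) : step := nth RedE w a.-1.

Definition phi_step (left : bool) (VE : seq nat * seq (nat * nat)) (p : nat * step) :=
  let x := pickV left VE.1 1 in
  let V := if closes p.2 then rem x VE.1 else VE.1 in
  (if opens p.2 then rcons V p.1 else V, if closes p.2 then (x, p.1) :: VE.2 else VE.2).

Lemma phi_edges_foldl left i s V E :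
  phi_edges left i s (nseq (size s) 1) V E =
  (foldl (phi_step left) (V, E) (zip (iota i (size s)) s)).2.
Proof. by elim: s i V E => [|[] s IH] i V E //=; rewrite IH. Qed.

Definition phi_state (left : bool) (w : seq step) (t : nat) :=
  foldl (phi_step left) ([::], [::]) (zip (iota 1 t) (take t w)).

Definition phi_arcs (left : bool) (w : seq step) := (phi_state left w (size w)).2.

Lemma iota1S t : iota 1 t.+1 = rcons (iota 1 t) t.+1.
Proof. by rewrite -[t.+1]addn1 iotaD cats1 add1n addn1. Qed.

Lemma phi_stateS left w t : t < size w ->
  phi_state left w t.+1 = phi_step left (phi_state left w t) (t.+1, step_at w t.+1).
Proof.
move=> tw; rewrite /phi_state iota1S (take_nth RedE tw) zip_rcons ?foldl_rcons //.
by rewrite size_iota size_take tw.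
Qed.

Lemma phi_gen_state left n w : size w = n ->
  phi_gen left n w (nseq n 1) = components n (phi_arcs left w).
Proof. by move=> <-; rewrite /phi_gen phi_edges_foldl /phi_arcs /phi_state take_size. Qed.

Lemma pickV_first left V : sorted ltn V -> V != [::] ->
  let x := pickV left V 1 in
  x \in V /\ {in V, forall y, y != x -> first_before left x y}.
Proof.
case: left; rewrite /pickV /first_before /=.
  case: V => // x V' /= sV _; split=> [|y]; first exact: mem_head.
  rewrite inE => /predU1P [->|yV]; rewrite ?eqxx // => _.
  exact: (allP (order_path_min ltn_trans sV)).
move=> sV nV.
have sV' : sorted [rel a b | b < a] (rev V) by rewrite rev_sorted.
have nV' : rev V != [::] by rewrite -size_eq0 size_rev size_eq0.
have gt_trans : transitive [rel a b : nat | b < a].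
  by move=> b a c /= ba cb; apply: ltn_trans ba.
have memV y : (y \in V) = (y \in rev V) by rewrite mem_rev.
move: sV' nV'; case: (rev V) memV => [|x V'] // memV /= sV' _.
split=> [|y]; first by rewrite memV mem_head.
rewrite memV inE => /predU1P [->|yV]; rewrite ?eqxx // => _.
exact: (allP (order_path_min gt_trans sV')).
Qed.

Definition open_points (w : seq step) (t : nat) (E : seq (nat * nat)) : seq nat :=
  [seq a <- iota 1 t | opens (step_at w a) && (a \notin map fst E)].

Lemma mem_open_points w t E a : (a \in open_points w t E) =
  [&& 0 < a, a <= t, opens (step_at w a) & a \notin map fst E].
Proof. by rewrite mem_filter mem_iota add1n ltnS andbC -!andbA. Qed.

Lemma sorted_open_points w t E : sorted ltn (open_points w t E).
Proof. by apply: sorted_filter; [exact: ltn_trans | exact: iota_ltn_sorted]. Qed.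

Lemma open_pointsS w t E : t.+1 \notin map fst E ->
  open_points w t.+1 E =
  if opens (step_at w t.+1) then rcons (open_points w t E) t.+1 else open_points w t E.
Proof. by move=> tE; rewrite /open_points iota1S filter_rcons tE andbT. Qed.

Lemma open_points_cons w t E x c :
  open_points w t ((x, c) :: E) = rem x (open_points w t E).
Proof.
rewrite rem_filter ?filter_uniq ?iota_uniq // -filter_predI.
by apply: eq_filter => a; rewrite /= in_cons negb_or andbCA.
Qed.

(* The last field is the choice rule of the process: the source of an arc (a, b)
   was the first, in the order [first_before left], of the points open just
   before b. *)
Record arc_inv (left : bool) (w : seq step) (t : nat) (E : seq (nat * nat)) : Prop :=
  ArcInv {
  arc_inv_bound : forall a b, (a, b) \in E ->
    [&& 0 < a, a < b, b <= t, opens (step_at w a) & closes (step_at w b)];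
  arc_inv_uniq_fst : uniq (map fst E);
  arc_inv_uniq_snd : uniq (map snd E);
  arc_inv_closed : forall b, 0 < b <= t -> closes (step_at w b) -> b \in map snd E;
  arc_inv_first : forall a b a', (a, b) \in E -> a' != a ->
    a' \in open_points w b.-1 [seq e <- E | e.2 < b] -> first_before left a a' }.

Lemma arc_inv0 left w : arc_inv left w 0 [::].
Proof. by split=> // b /andP [b0]; rewrite leqNgt b0. Qed.

Lemma arc_inv_fresh left w t E : arc_inv left w t E ->
  (t.+1 \notin map fst E) && (t.+1 \notin map snd E).
Proof.
move=> hE; apply/andP; split;
  by apply/mapP => -[[a b] /(arc_inv_bound hE) /and5P [_ ab bt _ _] /=]; lia.
Qed.

Lemma arc_invS_keep left w t E : arc_inv left w t E -> ~~ closes (step_at w t.+1) ->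
  arc_inv left w t.+1 E.
Proof.
case=> hb u1 u2 hc hf nc; split=> //.
  by move=> a b /hb /and5P [-> -> bt -> ->]; rewrite (leq_trans bt).
move=> b /andP [b0]; rewrite leq_eqVlt => /predU1P [->|bt]; first by rewrite (negbTE nc).
by apply: hc; rewrite b0 -ltnS.
Qed.

Lemma arc_invS_close left w t E x : arc_inv left w t E -> closes (step_at w t.+1) ->
  x \in open_points w t E ->
  {in open_points w t E, forall y, y != x -> first_before left x y} ->
  arc_inv left w t.+1 ((x, t.+1) :: E).
Proof.
move=> hE ct xV xfirst; have [hb u1 u2 hc hf] := hE.
have /and4P [x0 xt xo xE] : [&& 0 < x, x <= t, opens (step_at w x) & x \notin map fst E].
  by rewrite -mem_open_points.
have /andP [_ tE] := arc_inv_fresh hE.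
split.
- move=> a b; rewrite in_cons => /predU1P [[-> ->]|/hb /and5P [-> -> bt -> ->]].
    by rewrite x0 ltnS xt leqnn xo ct.
  by rewrite (leq_trans bt).
- by rewrite /= xE u1.
- by rewrite /= tE u2.
- move=> b /andP [b0]; rewrite /= in_cons leq_eqVlt => /predU1P [->|bt] cb.
    by rewrite eqxx.
  have -> : b \in map snd E by apply: hc cb; rewrite b0 -ltnS.
  by rewrite orbT.
- move=> a b a'; rewrite in_cons => /predU1P [[-> ->]|ab] a'a.
    have -> : [seq e <- (x, t.+1) :: E | e.2 < t.+1] = E.
      rewrite /= ltnn; apply/all_filterP/allP => -[c d] /hb /and5P [_ _ dt _ _].
      by rewrite ltnS.
    by move=> /= a'V; apply: xfirst a'V a'a.
  have /and5P [_ _ bt _ _] := hb _ _ ab.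
  have tb : (t.+1 < b) = false by lia.
  by rewrite /= tb; apply: hf.
Qed.

(* After t steps the height of the path is the number [size V] of open points. *)
Record phi_inv (left : bool) (w : seq step) (t : nat) (VE : seq nat * seq (nat * nat)) :
  Prop := PhiInv {
  phi_inv_arcs : arc_inv left w t VE.2;
  phi_inv_open : VE.1 = open_points w t VE.2;
  phi_inv_height : rb_from (size VE.1) (drop t w) }.

Lemma phi_invS left w t VE : t < size w -> phi_inv left w t VE ->
  phi_inv left w t.+1 (phi_step left VE (t.+1, step_at w t.+1)).
Proof.
case: VE => V E tw [/= hE hV hrb]; rewrite /phi_step /=.
set s := step_at w t.+1; set x := pickV left V 1.
have /andP [tfst _] := arc_inv_fresh hE.
move: hrb; rewrite (drop_nth RedE tw) -[nth RedE w t]/s rb_from_cons => /andP [hclose hrb].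
case cs: (closes s) hclose hrb => /= hclose hrb.
  have [xV xfirst] : x \in V /\ {in V, forall y, y != x -> first_before left x y}.
    apply: pickV_first; first by rewrite hV; apply: sorted_open_points.
    by rewrite -size_eq0 -lt0n.
  have tx : t.+1 \notin map fst ((x, t.+1) :: E).
    have /and4P [_ xt _ _] : [&& 0 < x, x <= t, opens (step_at w x) & x \notin map fst E].
      by rewrite -mem_open_points -hV.
    by rewrite /= in_cons negb_or tfst andbT; apply/eqP; lia.
  split=> /=.
  - by apply: arc_invS_close; rewrite -?hV.
  - by rewrite (open_pointsS _ tx) open_points_cons -hV.
  - suff -> : size (if opens s then rcons (rem x V) t.+1 else rem x V) =
              size V - 1 + opens s by [].
    by case: (opens s); rewrite /= ?size_rcons size_rem // subn1 ?addn1 ?addn0 ?prednK.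
split=> /=.
- by apply: arc_invS_keep; rewrite // cs.
- by rewrite (open_pointsS _ tfst) -hV.
- by move: hrb; case: (opens s); rewrite ?size_rcons subn0 ?addn1 ?addn0.
Qed.

Lemma phi_state_inv left w t : rb_from 0 w -> t <= size w ->
  phi_inv left w t (phi_state left w t).
Proof.
move=> rb; elim: t => [|t IH] ht.
  by rewrite /phi_state take0; split; rewrite /= ?drop0 //; apply: arc_inv0.
by rewrite phi_stateS //; apply: phi_invS => //; apply: IH; apply: ltnW.
Qed.

Lemma uniq_map_inj_in (T1 T2 : eqType) (f : T1 -> T2) (s : seq T1) :
  uniq (map f s) -> {in s &, injective f}.
Proof.
elim: s => [|z s IH] //= /andP [fz us] x y; rewrite !inE.
case/predU1P=> [->|xs] /predU1P [->|ys] // fxy.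
- by move: fz; rewrite fxy map_f.
- by move: fz; rewrite -fxy map_f.
- exact: IH.
Qed.

Section PhiArcs.
Variables (left : bool) (n : nat) (w : seq step).
Hypothesis hw : Mrb n w.

Let E := phi_arcs left w.
Let size_w : size w = n. Proof. by case/andP: hw => /eqP. Qed.

Let inv : phi_inv left w n (phi_state left w n).
Proof. by rewrite -size_w; apply: phi_state_inv; case/andP: hw. Qed.

Let hE : arc_inv left w n E.
Proof. by rewrite /E /phi_arcs size_w; case: inv. Qed.

Lemma phi_arcs_matched : open_points w n E = [::].
Proof.
case: inv => _; rewrite /E /phi_arcs size_w => <-.
by rewrite -size_w drop_size /= size_eq0 => /eqP.
Qed.

Lemma phi_arcs_system : arc_system n (arcs E).
Proof.
have [hb u1 u2 _ _] := hE.
split=> [a b /hb /and5P [-> -> -> _ _] //|a b b' ab ab'|a a' b ab a'b].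
  by case: (uniq_map_inj_in u1 ab ab' erefl).
by case: (uniq_map_inj_in u2 ab a'b erefl).
Qed.

Lemma phi_arcs_extreme : extreme_arcs left (arcs E).
Proof.
have [hb u1 _ _ hf] := hE.
move=> a b a' b' ab a'b' a'a a'b bb'; apply: hf ab a'a _.
have /and5P [a'0 _ _ a'o _] := hb _ _ a'b'.
rewrite mem_open_points a'0 a'o -ltnS prednK ?(leq_ltn_trans _ a'b) //=.
apply/mapP => -[[c d]]; rewrite mem_filter => /andP [/= db cd] /= a'c.
rewrite -a'c in cd; have [] := uniq_map_inj_in u1 a'b' cd erefl.
by move=> bd; rewrite bd ltnNge ltnW in bb'.
Qed.

Lemma has_out_phi_arcs a : 0 < a <= n -> has_out n (arcs E) a = opens (step_at w a).
Proof.
have [hb _ _ _ _] := hE.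
move=> an; apply/hasP/idP => [[b _ /hb /and5P []] //|oa].
have : a \in map fst E.
  apply: contraT => aE; have /andP [a0 an'] := an.
  have : a \in open_points w n E by rewrite mem_open_points a0 an' oa aE.
  by rewrite phi_arcs_matched.
case/mapP=> -[a' b] ab /= ->; exists b => //.
by have /and5P [_ a'b bn _ _] := hb _ _ ab; rewrite mem_iota; lia.
Qed.

Lemma has_in_phi_arcs b : 0 < b <= n -> has_in n (arcs E) b = closes (step_at w b).
Proof.
have [hb _ _ hc _] := hE.
move=> bn; apply/hasP/idP => [[a _ /hb /and5P []] //|cb].
case/mapP: (hc _ bn cb) => -[a b'] ab /= ->; exists a => //.
by have /and5P [a0 ab' b'n _ _] := hb _ _ ab; rewrite mem_iota; lia.
Qed.
End PhiArcs.

(** * The path of an arc system *)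

Definition word_of_arcs n (G : rel nat) : seq step :=
  [seq step_of (has_out n G a) (has_in n G a) | a <- iota 1 n].

(* [size (open_arcs n G t)] is the height of [word_of_arcs n G] after t steps. *)
Definition open_arcs n (G : rel nat) (t : nat) : seq nat :=
  [seq a <- iota 1 t | has (fun b => (t < b) && G a b) (iota 1 n)].

Lemma size_word_of_arcs n G : size (word_of_arcs n G) = n.
Proof. by rewrite size_map size_iota. Qed.

Lemma step_at_word_of_arcs n G a : 0 < a <= n ->
  step_at (word_of_arcs n G) a = step_of (has_out n G a) (has_in n G a).
Proof.
by case/andP=> a0 an; rewrite /step_at (nth_map 0) ?nth_iota ?size_iota ?add1n ?prednK.
Qed.

Section OpenArcs.
Variables (n : nat) (G : rel nat).
Hypothesis hG : arc_system n G.

Lemma count_closing t : t < n -> count (G^~ t.+1) (iota 1 t) = has_in n G t.+1.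
Proof.
move=> tn; case: (boolP (has_in n G t.+1)) => [/hasP [a _ gat]|no_in].
  have /and3P [a0 a_lt _] := arc_bound hG gat.
  rewrite (eq_count (a2 := pred1 a)) ?count_uniq_mem ?iota_uniq ?mem_iota //=; first lia.
  by move=> a' /=; apply/idP/eqP => [ga't|->//]; exact: (arc_inj hG ga't gat).
apply/eqP; rewrite eqn0Ngt -has_count; apply: contra no_in => /hasP [a _ gat].
by apply/hasP; exists a; rewrite // mem_iota; have := arc_bound hG gat; lia.
Qed.

Lemma size_open_arcsS t : t < n ->
  size (open_arcs n G t.+1) + has_in n G t.+1 = size (open_arcs n G t) + has_out n G t.+1.
Proof.
move=> tn; set p' := fun a => has (fun b => (t.+1 < b) && G a b) (iota 1 n).
have last_out : has (fun b => (t.+1 < b) && G t.+1 b) (iota 1 n) = has_out n G t.+1.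
  apply: eq_has => b; case g: (G _ b); rewrite ?andbF ?andbT //.
  by have := arc_bound hG g; lia.
have split_open a : has (fun b => (t < b) && G a b) (iota 1 n) = p' a || G a t.+1.
  apply/hasP/orP => [[b bn /andP [tb gab]]|[/hasP [b bn /andP [tb gab]]|gat]].
  - case: (ltngtP t.+1 b) => [tb'|bt|->]; [left | lia | by right].
    by apply/hasP; exists b; rewrite ?tb'.
  - by exists b; rewrite // (ltnW tb).
  - by exists t.+1; rewrite ?gat ?ltnSn ?andbT // mem_iota; lia.
have disjoint a : p' a && G a t.+1 = false.
  apply/negbTE/negP => /andP [/hasP [b _ /andP [tb gab]] gat].
  by rewrite (arc_func hG gab gat) ltnn in tb.
have count_open : count (fun a => has (fun b => (t < b) && G a b) (iota 1 n)) (iota 1 t)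
    = count p' (iota 1 t) + count (G^~ t.+1) (iota 1 t).
  rewrite -count_predUI (eq_count (a1 := predI _ _) (a2 := pred0)) ?count_pred0 ?addn0.
    by apply: eq_count => a; rewrite split_open.
  by move=> a; rewrite /= disjoint.
rewrite /open_arcs iota1S filter_rcons last_out size_filter count_open count_closing //.
by case: (has_out n G t.+1); rewrite ?size_rcons size_filter -/p' /=; lia.
Qed.

Lemma open_arcs_closing t : has_in n G t.+1 -> 0 < size (open_arcs n G t).
Proof.
rewrite /has_in => /hasP [a _ gat]; have /and3P [a0 a_lt tn] := arc_bound hG gat.
have aO : a \in open_arcs n G t.
  rewrite mem_filter mem_iota a0 add1n a_lt /= andbT; apply/hasP.
  by exists t.+1; [rewrite mem_iota; lia | rewrite ltnSn gat].
by case: (open_arcs n G t) aO.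
Qed.

Lemma word_of_arcs_Mrb : Mrb n (word_of_arcs n G).
Proof.
rewrite /Mrb size_word_of_arcs eqxx /=.
suff height k : k <= n ->
    rb_from (size (open_arcs n G (n - k))) (drop (n - k) (word_of_arcs n G)).
  by have := height n (leqnn n); rewrite subnn drop0.
elim: k => [|k IH] kn.
  rewrite subn0 drop_oversize ?size_word_of_arcs //= size_eq0 -[_ == _]negbK -has_filter.
  apply/hasPn => a _; apply/hasPn => b; rewrite mem_iota add1n ltnS => /andP [_ bn].
  by rewrite ltnNge bn.
have tn : n - k.+1 < n by lia.
have := IH (ltnW kn); have -> : n - k = (n - k.+1).+1 by lia.
move: (n - k.+1) tn => t tn rb.
rewrite (drop_nth RedE) ?size_word_of_arcs // -[nth RedE _ _]/(step_at _ t.+1).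
rewrite step_at_word_of_arcs // rb_from_cons closes_step_of opens_step_of.
have -> : size (open_arcs n G t) - has_in n G t.+1 + has_out n G t.+1 =
          size (open_arcs n G t.+1).
  move: (size_open_arcsS tn) (@open_arcs_closing t).
  by case: (has_in n G t.+1) => /= sz; [move=> /(_ isT) | move=> _]; lia.
by rewrite rb andbT; apply/implyP; apply: open_arcs_closing.
Qed.
End OpenArcs.

Section PhiBijection.
Variables (left : bool) (n : nat).

Lemma phi_gen_mem w : Mrb n w -> phi_gen left n w (nseq n 1) \in good_partitions left n.
Proof.
move=> hw; have hE := phi_arcs_system left hw.
rewrite phi_gen_state; last by case/andP: hw => /eqP.
have edgesE := is_edge_components (arc_system_chain hE).
apply/(good_partitionsP left (components_partition _ _) hE edgesE).
exact: (phi_arcs_extreme hw).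
Qed.

Lemma phi_gen_inj w1 w2 : Mrb n w1 -> Mrb n w2 ->
  phi_gen left n w1 (nseq n 1) = phi_gen left n w2 (nseq n 1) -> w1 = w2.
Proof.
move=> hw1 hw2; have [/eqP size1 _] := andP hw1; have [/eqP size2 _] := andP hw2.
rewrite !phi_gen_state // => same.
have hE1 := phi_arcs_system left hw1; have hE2 := phi_arcs_system left hw2.
have E12 : arcs (phi_arcs left w1) =2 arcs (phi_arcs left w2).
  apply: (arc_system_eq hE1 hE2) => i j.
  rewrite -(is_edge_components (arc_system_chain hE1)).
  by rewrite -(is_edge_components (arc_system_chain hE2)) same.
apply: (@eq_from_nth _ RedE); first by rewrite size1 size2.
move=> t; rewrite size1 => tn; have ta : 0 < t.+1 <= n by [].
rewrite -[nth _ w1 t]/(step_at w1 t.+1) -[nth _ w2 t]/(step_at w2 t.+1).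
rewrite -(step_ofK (step_at w1 _)) -(step_ofK (step_at w2 _)).
rewrite -(has_out_phi_arcs left hw1 ta) -(has_in_phi_arcs left hw1 ta).
rewrite -(has_out_phi_arcs left hw2 ta) -(has_in_phi_arcs left hw2 ta).
by rewrite /has_out /has_in (eq_has (E12 t.+1)) (eq_has (E12^~ t.+1)).
Qed.

Lemma phi_gen_surj P : P \in good_partitions left n ->
  exists2 w, Mrb n w & phi_gen left n w (nseq n 1) = P.
Proof.
move=> PG; have hP : partition P [set: 'I_n].
  by move: PG; rewrite /good_partitions; case: left; rewrite inE => /andP [].
have hG := edge_arcs_system hP.
have PG' : is_edge P =2 ord_rel n (edge_arcs P) by move=> i j; rewrite ord_rel_edge_arcs.
have xG := proj1 (good_partitionsP left hP hG PG') PG.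
have hw := word_of_arcs_Mrb hG; exists (word_of_arcs n (edge_arcs P)) => //.
have hE := phi_arcs_system left hw.
have EG : arcs (phi_arcs left (word_of_arcs n (edge_arcs P))) =2 edge_arcs P.
  apply: (extreme_arcs_unique hE hG (phi_arcs_extreme hw) xG) => a ha.
    by rewrite (has_out_phi_arcs left hw ha) step_at_word_of_arcs // opens_step_of.
  by rewrite (has_in_phi_arcs left hw ha) step_at_word_of_arcs // closes_step_of.
rewrite phi_gen_state ?size_word_of_arcs //.
apply: (partition_eq_edges (components_partition _ _) hP) => i j.
by rewrite (is_edge_components (arc_system_chain hE)) PG'; apply: EG.
Qed.

Lemma phi_gen_bij :
  bij_onto (Mrb n) (fun w => phi_gen left n w (nseq n 1)) (good_partitions left n).
Proof. by split; [exact: phi_gen_mem | exact: phi_gen_inj | exact: phi_gen_surj]. Qed.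
End PhiBijection.

Theorem corollary3p3 (n : nat) : 0 < n ->
  bij_onto (Mrb n) (fun w => phi_r n w (nseq n 1)) (NC n) /\
  bij_onto (Mrb n) (fun w => phi_l n w (nseq n 1)) (NN n).
Proof. by move=> _; split; [exact: phi_gen_bij false n | exact: phi_gen_bij true n]. Qed.
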